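(* $$\sum_{k=1}^\infty\frac{26975k^2-17111k+2968}{k(-8)^k\binom{4k}k}=-297-120\log2.$$ *)

From Stdlib Require Import Reals.
From Coquelicot Require Import Coquelicot.
Open Scope R_scope.

Definition term (k : nat) : R :=
  (26975 * INR k ^ 2 - 17111 * INR k + 2968)
  / (INR k * (-8) ^ k * Binomial.C (4 * k) k).

From Stdlib Require Import Reals Lra Lia Factorial.
From Coquelicot Require Import Coquelicot.
Open Scope R_scope.

(* By the beta integral, [term (S j)] is the integral over [0, 1] of
   [weight x * P (j + 1) * ratio x ^ j] (P the quadratic numerator of [term]), with [ratio x = - x (1 - x) ^ 3 / 8] and
   [weight x = - (1 - x) ^ 3 / 8].  Since [|ratio x| <= 27 / 2048] on [0, 1], the partial
   sums of these integrands converge geometrically fast, uniformly in [x], to the rational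
   function [weight * M (ratio) / (1 - ratio) ^ 3] obtained by summing a quadratic times a
   geometric series; an explicit primitive of that function gives its integral
   [-297 - 120 ln 2]. *)

Lemma is_RInt_eq (f g : R -> R) (a b I J : R) :
  (forall x, Rmin a b < x < Rmax a b -> f x = g x) -> I = J ->
  is_RInt f a b I -> is_RInt g a b J.
Proof. intros Hfg <- Hf. exact (is_RInt_ext f g a b I Hfg Hf). Qed.

Lemma is_RInt_sum_n {V : NormedModule R_AbsRing} (f : nat -> R -> V) (I : nat -> V)
  (a b : R) (n : nat) :
  (forall j, is_RInt (f j) a b (I j)) ->
  is_RInt (fun x => sum_n (fun j => f j x) n) a b (sum_n I n).
Proof.
  intros Hf. induction n as [|n IH].
  - rewrite sum_O. apply (is_RInt_ext (f 0%nat)); [|apply Hf].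
    intros x _. rewrite sum_O. reflexivity.
  - rewrite sum_Sn. apply (is_RInt_ext _ _ _ _ _ (fun x _ => eq_sym (sum_Sn (fun j => f j x) n))).
    apply is_RInt_plus; [exact IH | apply Hf].
Qed.

Lemma is_lim_seq_geom_bound (u : nat -> R) (l C q : R) :
  Rabs q < 1 -> (forall n, Rabs (u n - l) <= C * q ^ n) -> is_lim_seq u l.
Proof.
  intros Hq Hu.
  assert (Hlim : is_lim_seq (fun n => C * q ^ n) 0).
  { replace (Finite 0) with (Rbar_mult C 0) by (simpl; rewrite Rmult_0_r; reflexivity).
    apply is_lim_seq_scal_l, is_lim_seq_geom, Hq. }
  apply is_lim_seq_le_le with (fun n => l - C * q ^ n) (fun n => l + C * q ^ n).
  - intros n. specialize (Hu n). apply Rabs_le_between' in Hu. lra.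
  - replace (Finite l) with (Finite (l - 0)) by (f_equal; ring).
    apply is_lim_seq_minus'; [apply is_lim_seq_const | exact Hlim].
  - replace (Finite l) with (Finite (l + 0)) by (f_equal; ring).
    apply is_lim_seq_plus'; [apply is_lim_seq_const | exact Hlim].
Qed.

Lemma INR_add_2_le_pow2 (n : nat) : INR n + 2 <= 2 ^ S n.
Proof.
  induction n as [|n IH].
  - simpl. lra.
  - rewrite S_INR. change (2 ^ S (S n)) with (2 * 2 ^ S n).
    pose proof (pow_R1_Rle 2 (S n)). lra.
Qed.

Lemma is_RInt_pow_01 (a : nat) : is_RInt (fun x => x ^ a) 0 1 (/ INR (S a)).
Proof.
  assert (Hftc : is_RInt (fun x => INR (S a) * x ^ a) 0 1 (1 ^ S a - 0 ^ S a)).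
  { apply (is_RInt_derive (fun x => x ^ S a)).
    - intros x _. auto_derive; [easy|].
      (* [auto_derive] unfolds [INR (S a)]; fold it back. *)
      change (match a with 0%nat => 1 | S _ => INR a + 1 end) with (INR (S a)).
      simpl pow; ring.
    - intros x _.
      apply (ex_derive_continuous (K := R_AbsRing) (V := R_NormedModule)).
      auto_derive. easy. }
  apply (is_RInt_scal _ _ _ (/ INR (S a))) in Hftc.
  pose proof (pos_INR a).
  revert Hftc; rewrite !S_INR; apply is_RInt_eq; cbn.
  - intros x _. field. lra.
  - rewrite pow1. field. lra.
Qed.

(* Integration by parts against [x ^ S a * (1 - x) ^ S b], which vanishes at both ends. *)
Lemma is_RInt_beta_succ (a b : nat) (I : R) :
  is_RInt (fun x => x ^ S a * (1 - x) ^ b) 0 1 I ->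
  is_RInt (fun x => x ^ a * (1 - x) ^ S b) 0 1 (INR (S b) / INR (S a) * I).
Proof.
  intros HI.
  assert (Hftc : is_RInt
    (fun x => INR (S a) * (x ^ a * (1 - x) ^ S b) - INR (S b) * (x ^ S a * (1 - x) ^ b))
    0 1 (1 ^ S a * (1 - 1) ^ S b - 0 ^ S a * (1 - 0) ^ S b)).
  { apply (is_RInt_derive (fun x => x ^ S a * (1 - x) ^ S b)).
    - intros x _. auto_derive; [easy|].
      change (match a with 0%nat => 1 | S _ => INR a + 1 end) with (INR (S a)).
      change (match b with 0%nat => 1 | S _ => INR b + 1 end) with (INR (S b)).
      unfold Rminus; simpl pow; ring.
    - intros x _.
      apply (ex_derive_continuous (K := R_AbsRing) (V := R_NormedModule)).
      auto_derive. easy. }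
  pose proof (is_RInt_scal _ _ _ (/ INR (S a)) _
    (is_RInt_plus _ _ _ _ _ _ Hftc (is_RInt_scal _ _ _ (INR (S b)) _ HI))) as Hsum.
  pose proof (pos_INR a).
  revert Hsum; rewrite !S_INR; apply is_RInt_eq; cbn.
  - intros x _. field. lra.
  - field. lra.
Qed.

Lemma is_RInt_beta (a b : nat) :
  is_RInt (fun x => x ^ a * (1 - x) ^ b) 0 1
    (INR (fact a) * INR (fact b) / INR (fact (a + b + 1))).
Proof.
  revert a; induction b as [|b IH]; intros a.
  - generalize (is_RInt_pow_01 a); apply is_RInt_eq.
    + intros x _. ring.
    + rewrite Nat.add_0_r, Nat.add_1_r. cbn [fact]. rewrite mult_INR.
      pose proof (INR_fact_neq_0 a). rewrite INR_1. field. split; auto. apply not_0_INR; lia.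
  - generalize (is_RInt_beta_succ a b _ (IH (S a))); apply is_RInt_eq; [easy|].
    replace (S a + b + 1)%nat with (a + S b + 1)%nat by lia.
    cbn [fact]. rewrite !mult_INR.
    pose proof (INR_fact_neq_0 a). pose proof (INR_fact_neq_0 (a + S b + 1)).
    field. split; auto. apply not_0_INR; lia.
Qed.

Section QuadraticTimesGeometric.

Variables a b c : R.

Definition quad (k : R) : R := a * k ^ 2 + b * k + c.

(* [sum_(j >= 0) quad (j + 1) w ^ j = quad_gf_num w / (1 - w) ^ 3] for [|w| < 1]. *)
Definition quad_gf_num (w : R) : R := a * (1 + w) + b * (1 - w) + c * (1 - w) ^ 2.

Definition quad_tail_num (r w : R) : R :=
  quad r * (1 - w) ^ 2 + (2 * a * r + b) * w * (1 - w) + a * w * (1 + w).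

Lemma sum_n_quad_geom_mul (n : nat) (w : R) :
  sum_n (fun j => quad (INR (S j)) * w ^ j) n * (1 - w) ^ 3
  = quad_gf_num w - w ^ S n * quad_tail_num (INR n + 2) w.
Proof.
  induction n as [|n IH].
  - rewrite sum_O. cbn. unfold quad_gf_num, quad_tail_num, quad. ring.
  - rewrite sum_Sn. change (plus ?u ?v) with (u + v).
    rewrite Rmult_plus_distr_r, IH, !S_INR. unfold quad_gf_num, quad_tail_num, quad.
    simpl pow. ring.
Qed.

Lemma quad_abs_le (r : R) : 1 <= r -> Rabs (quad r) <= (Rabs a + Rabs b + Rabs c) * r ^ 2.
Proof.
  intros Hr. unfold quad.
  assert (0 <= Rabs a) by apply Rabs_pos. assert (0 <= Rabs b) by apply Rabs_pos.
  assert (0 <= Rabs c) by apply Rabs_pos.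
  eapply Rle_trans; [apply Rabs_triang|]. eapply Rle_trans; [apply Rplus_le_compat_r, Rabs_triang|].
  rewrite !Rabs_mult, (Rabs_pos_eq r), (Rabs_pos_eq (r ^ 2)) by (try apply pow_le; lra).
  assert (r <= r ^ 2) by nra. assert (1 <= r ^ 2) by nra.
  nra.
Qed.

Lemma quad_tail_num_abs_le (r w : R) :
  1 <= r -> Rabs w <= 1 ->
  Rabs (quad_tail_num r w) <= 10 * (Rabs a + Rabs b + Rabs c) * r ^ 2.
Proof.
  intros Hr Hw. unfold quad_tail_num.
  assert (0 <= Rabs a) by apply Rabs_pos. assert (0 <= Rabs b) by apply Rabs_pos.
  assert (0 <= Rabs c) by apply Rabs_pos.
  assert (r <= r ^ 2) by nra. assert (1 <= r ^ 2) by nra.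
  assert (Hlin : Rabs (2 * a * r + b) <= (2 * Rabs a + Rabs b) * r ^ 2).
  { eapply Rle_trans; [apply Rabs_triang|].
    rewrite !Rabs_mult, (Rabs_pos_eq r), (Rabs_pos_eq 2) by lra. nra. }
  assert (Hm : Rabs (1 - w) <= 2).
  { eapply Rle_trans; [apply Rabs_triang|]. rewrite Rabs_Ropp, Rabs_R1. lra. }
  assert (Hp : Rabs (1 + w) <= 2).
  { eapply Rle_trans; [apply Rabs_triang|]. rewrite Rabs_R1. lra. }
  pose proof (Rabs_pos w). pose proof (Rabs_pos (1 - w)). pose proof (Rabs_pos (1 + w)).
  assert (T1 : Rabs (quad r) * Rabs (1 - w) ^ 2 <= (Rabs a + Rabs b + Rabs c) * r ^ 2 * 2 ^ 2).
  { apply Rmult_le_compat; [apply Rabs_pos | apply pow_le, Rabs_pos | apply quad_abs_le, Hr |].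
    apply pow_incr. lra. }
  assert (T2 : Rabs (2 * a * r + b) * Rabs w * Rabs (1 - w) <= (2 * Rabs a + Rabs b) * r ^ 2 * 1 * 2).
  { repeat apply Rmult_le_compat; try apply Rmult_le_pos; try apply Rabs_pos; lra. }
  assert (T3 : Rabs a * Rabs w * Rabs (1 + w) <= Rabs a * 1 * 2).
  { repeat apply Rmult_le_compat; try apply Rmult_le_pos; try apply Rabs_pos; lra. }
  eapply Rle_trans; [apply Rabs_triang|]. eapply Rle_trans; [apply Rplus_le_compat_r, Rabs_triang|].
  rewrite !Rabs_mult, <- RPow_abs.
  nra.
Qed.

Lemma sum_n_quad_geom (n : nat) (w : R) :
  w <> 1 ->
  (sum_n (fun j => quad (INR (S j)) * w ^ j) n : R)
  = (quad_gf_num w - w ^ S n * quad_tail_num (INR n + 2) w) / (1 - w) ^ 3.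
Proof.
  intros Hw. rewrite <- sum_n_quad_geom_mul, Rmult_div_l; [reflexivity|].
  apply pow_nonzero. lra.
Qed.

End QuadraticTimesGeometric.

Local Notation P := (quad 26975 (-17111) 2968).

Definition ratio (x : R) : R := - (x * (1 - x) ^ 3) / 8.

Definition weight (x : R) : R := - (1 - x) ^ 3 / 8.

Lemma term_eq_beta (j : nat) :
  term (S j) = P (INR (S j)) * (-1 / 8) ^ S j
    * (INR (fact j) * INR (fact (3 * S j)) / INR (fact (j + 3 * S j + 1))).
Proof.
  unfold term, Binomial.C, quad.
  replace (4 * S j - S j)%nat with (3 * S j)%nat by lia.
  replace (j + 3 * S j + 1)%nat with (4 * S j)%nat by lia.
  change (fact (S j)) with (S j * fact j)%nat. rewrite mult_INR.
  replace (-1 / 8) with (/ -8) by field. rewrite pow_inv.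
  pose proof (INR_fact_neq_0 j). pose proof (INR_fact_neq_0 (3 * S j)).
  pose proof (INR_fact_neq_0 (4 * S j)).
  assert ((-8) ^ S j <> 0) by (apply pow_nonzero; lra).
  assert (INR (S j) <> 0) by (apply not_0_INR; lia).
  field. repeat split; auto.
Qed.

Lemma is_RInt_term (j : nat) :
  is_RInt (fun x => weight x * (P (INR (S j)) * ratio x ^ j)) 0 1 (term (S j)).
Proof.
  generalize (is_RInt_scal _ _ _ (P (INR (S j)) * (-1 / 8) ^ S j) _ (is_RInt_beta j (3 * S j))).
  apply is_RInt_eq; change (scal ?k ?v) with (k * v).
  - intros x _. unfold weight, ratio. rewrite pow_mult. set (y := (1 - x) ^ 3).
    replace (- (x * y) / 8) with (-1 / 8 * (x * y)) by field.
    rewrite !Rpow_mult_distr. simpl (y ^ S j). simpl ((-1 / 8) ^ S j). field.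
  - symmetry. apply term_eq_beta.
Qed.

Lemma ratio_bounds (x : R) : 0 <= x <= 1 -> - (27 / 2048) <= ratio x <= 0.
Proof.
  intros Hx. unfold ratio.
  assert (0 <= (x - 1 / 4) ^ 2 * ((x - 5 / 4) ^ 2 + 1 / 8)).
  { apply Rmult_le_pos; [apply pow2_ge_0|]. pose proof (pow2_ge_0 (x - 5 / 4)). lra. }
  assert (0 <= x * (1 - x) ^ 3) by (apply Rmult_le_pos; [lra | apply pow_le; lra]).
  assert (27 / 256 - x * (1 - x) ^ 3 = (x - 1 / 4) ^ 2 * ((x - 5 / 4) ^ 2 + 1 / 8)) by field.
  lra.
Qed.

Local Notation M := (quad_gf_num 26975 (-17111) 2968).
Local Notation Q := (quad_tail_num 26975 (-17111) 2968).

Definition integrand (x : R) : R := weight x * M (ratio x) / (1 - ratio x) ^ 3.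

Definition remainder (n : nat) (x : R) : R :=
  weight x / (1 - ratio x) ^ 3 * (ratio x ^ S n * Q (INR n + 2) (ratio x)).

Lemma sum_n_weighted_terms (n : nat) (x : R) :
  0 <= x <= 1 ->
  (sum_n (fun j => weight x * (P (INR (S j)) * ratio x ^ j)) n : R)
  = integrand x - remainder n x.
Proof.
  intros Hx. pose proof (ratio_bounds x Hx).
  rewrite (sum_n_mult_l (K := R_Ring)). change (mult ?u ?v) with (u * v).
  rewrite sum_n_quad_geom by lra.
  unfold integrand, remainder. field. lra.
Qed.

(* Found by partial fractions; note that [8 + x (1 - x) ^ 3 = 8 (1 - ratio x)]. *)
Definition primitive (x : R) : R :=
  (-259520 - 154160 * x + 339288 * x ^ 2 - 304224 * x ^ 3 + 115280 * x ^ 4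
   - 24144 * x ^ 5 + 10968 * x ^ 6 - 2016 * x ^ 7) / (8 + x * (1 - x) ^ 3) ^ 2
  - 120 * ln (1 + x) - 712 * ln (8 + x * (1 - x) ^ 3).

Lemma is_derive_primitive (x : R) : 0 <= x <= 1 -> is_derive primitive x (integrand x).
Proof.
  intros Hx. pose proof (ratio_bounds x Hx) as Hr. unfold ratio in Hr.
  unfold primitive. auto_derive.
  - repeat split; try lra; intro Z; nra.
  - unfold integrand, weight, ratio, quad_gf_num. field. split; [|lra]. intro Z; nra.
Qed.

Lemma is_RInt_integrand : is_RInt integrand 0 1 (-297 - 120 * ln 2).
Proof.
  replace (-297 - 120 * ln 2) with (primitive 1 - primitive 0).
  - apply (is_RInt_derive primitive).
    + intros x Hx. rewrite Rmin_left, Rmax_right in Hx by lra.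
      apply is_derive_primitive. lra.
    + intros x Hx. rewrite Rmin_left, Rmax_right in Hx by lra.
      pose proof (ratio_bounds x Hx) as Hr.
      apply (ex_derive_continuous (K := R_AbsRing) (V := R_NormedModule)).
      unfold integrand, weight, ratio, quad_gf_num in *. auto_derive.
      repeat apply Rmult_integral_contrapositive_currified; lra.
  - unfold primitive.
    replace (8 + 1 * (1 - 1) ^ 3) with 8 by ring.
    replace (8 + 0 * (1 - 0) ^ 3) with 8 by ring.
    replace (1 + 1) with 2 by ring. rewrite Rplus_0_r, ln_1. field.
Qed.

Lemma weight_div_abs_le (x : R) :
  0 <= x <= 1 -> Rabs (weight x / (1 - ratio x) ^ 3) <= / 8.
Proof.
  intros Hx. pose proof (ratio_bounds x Hx) as Hw.
  assert (0 < / (1 - ratio x) ^ 3 <= 1).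
  { assert (1 <= (1 - ratio x) ^ 3) by (apply pow_R1_Rle; lra).
    split; [apply Rinv_0_lt_compat; lra|].
    rewrite <- Rinv_1. apply Rinv_le_contravar; lra. }
  assert (0 <= (1 - x) ^ 3 <= 1).
  { split; [apply pow_le; lra|]. rewrite <- (pow1 3). apply pow_incr. lra. }
  unfold weight, Rdiv. rewrite !Rabs_mult, Rabs_Ropp, !Rabs_pos_eq by lra. nra.
Qed.

Lemma remainder_abs_le (n : nat) (x : R) :
  0 <= x <= 1 ->
  Rabs (remainder n x) <= / 8 * (10 * (26975 + 17111 + 2968)) * (4 * (27 / 2048)) ^ S n.
Proof.
  intros Hx. pose proof (ratio_bounds x Hx) as Hw.
  set (r := INR n + 2).
  assert (Hr : 1 <= r) by (unfold r; pose proof (pos_INR n); lra).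
  pose proof (weight_div_abs_le x Hx) as Hfactor.
  assert (Hpow : Rabs (ratio x ^ S n) <= (27 / 2048) ^ S n).
  { rewrite <- RPow_abs. apply pow_incr. split; [apply Rabs_pos|].
    apply Rabs_le_between. lra. }
  assert (Htail : Rabs (Q r (ratio x)) <= 10 * (26975 + 17111 + 2968) * 4 ^ S n).
  { eapply Rle_trans; [apply quad_tail_num_abs_le; [exact Hr | apply Rabs_le_between; lra]|].
    replace (Rabs (-17111)) with 17111 by (rewrite Rabs_left; lra).
    rewrite (Rabs_pos_eq 26975), (Rabs_pos_eq 2968) by lra.
    apply Rmult_le_compat_l; [lra|].
    replace 4 with (2 ^ 2) by ring. rewrite <- pow_mult, Nat.mul_comm, pow_mult.
    apply pow_incr. split; [lra|]. apply INR_add_2_le_pow2. }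
  unfold remainder. fold r. rewrite !Rabs_mult, Rpow_mult_distr.
  pose proof (Rabs_pos (weight x / (1 - ratio x) ^ 3)).
  pose proof (Rabs_pos (ratio x ^ S n)). pose proof (Rabs_pos (Q r (ratio x))).
  assert (0 <= (27 / 2048) ^ S n) by (apply pow_le; lra).
  assert (0 <= 4 ^ S n) by (apply pow_le; lra).
  apply Rle_trans with (/ 8 * ((27 / 2048) ^ S n * (10 * (26975 + 17111 + 2968) * 4 ^ S n))).
  - apply Rmult_le_compat; try apply Rmult_le_pos; auto.
    apply Rmult_le_compat; auto.
  - lra.
Qed.

Lemma partial_sum_abs_le (n : nat) :
  Rabs (sum_n (fun j => term (S j)) n - (-297 - 120 * ln 2))
  <= / 8 * (10 * (26975 + 17111 + 2968)) * (4 * (27 / 2048)) ^ S n.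
Proof.
  assert (Hsum : is_RInt (fun x => integrand x - remainder n x) 0 1
                   (sum_n (fun j => term (S j)) n)).
  { generalize (is_RInt_sum_n _ _ 0 1 n is_RInt_term). apply is_RInt_eq; [|reflexivity].
    intros x Hx. rewrite Rmin_left, Rmax_right in Hx by lra.
    apply sum_n_weighted_terms. lra. }
  assert (Hrem : is_RInt (remainder n) 0 1
                   (-297 - 120 * ln 2 - sum_n (fun j => term (S j)) n)).
  { generalize (is_RInt_minus _ _ _ _ _ _ is_RInt_integrand Hsum).
    apply is_RInt_eq; [|reflexivity]. intros x _. change (minus ?u ?v) with (u - v). ring. }
  rewrite Rabs_minus_sym.
  apply (norm_RInt_le_const (remainder n) 0 1 _ _ Rle_0_1 (fun x Hx => remainder_abs_le n x Hx)) in Hrem.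
  change (norm ?v) with (Rabs v) in Hrem. lra.
Qed.

Theorem lemma3p2 :
  is_series (fun n : nat => term (S n)) (-297 - 120 * ln 2).
Proof.
  apply (is_lim_seq_geom_bound _ _ (/ 8 * (10 * (26975 + 17111 + 2968)) * (4 * (27 / 2048)))
           (4 * (27 / 2048))).
  - rewrite Rabs_pos_eq; lra.
  - intros n. eapply Rle_trans; [apply partial_sum_abs_le|].
    rewrite <- tech_pow_Rmult. lra.
Qed.
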